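(* Let $\{X_1,\ldots,X_{p_n}\}$ be random variables with index set $V=\{1,\ldots,p_n\}$, observed through $n$ i.i.d. samples, and for each pair $i\neq j$ let $e_{ij}=0$ if $X_i$ and $X_j$ are conditionally independent given $\boldsymbol X_{V\setminus\{i,j\}}$ and $e_{ij}=1$ otherwise. For each $i$ let $S_i$ be the set of true variables of the regression $X_i\sim \boldsymbol X_{V\setminus\{i\}}$, and for each pair $j<i$ let $S_{j\setminus i}$ be the set of true variables of the regression $X_j\sim \boldsymbol X_{V\setminus\{i,j\}}$; let $\hat S_i$ and $\hat S_{j\setminus i}$ be the index sets selected from data by a variable selection/screening procedure applied to these two regressions. For each pair $j<i$, let $T_{ij}$ be the statistic of a nonparametric test of $X_i \perp X_j \mid \boldsymbol X_{\hat S_i\cup \hat S_{j\setminus i}\setminus\{j\}}$, let $\mu_{ij}=E(T_{ij})$, and let $\mu_{ij,0}$ and $\mu_{ij,1}$ denote the mean of $T_{ij}$ under the null hypothesis $e_{ij}=0$ and the alternative $e_{ij}=1$, respectively. Assume: (1) the generative distribution of the data is Markov and faithful to a directed acyclic graph; (2) $p_n$ increases as a polynomial of $n$; (3) (uniform sure screening) $\min_{1\le i\le p_n} P(S_i\subset \hat S_i)\to 1$ and $\min_{1\le j<i\le p_n} P(S_{j\setminus i}\subset \hat S_{j\setminus i})\to 1$ as $n\to\infty$; (4) (separation) $\min_{i,j}(\mu_{ij,1}-\mu_{ij,0})>\eta_n$, where $\eta_n=c_0 n^{-\kappa}$ for some constants $c_0>0$, $\kappa>0$; (5) (tail probability) $\sup_{i,j}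 P(|T_{ij}-\mu_{ij}|>\tfrac12\eta_n)=\exp\{-O(n^{\delta(\kappa)})\}$ for some positive number $\delta(\kappa)$ depending on $\kappa$. Let $\hat{\mathcal E}_n$ be the estimated network obtained by declaring, for each pair $(X_i,X_j)$, an edge ($e_{ij}=1$) if and only if $T_{ij}>\mu_{ij,0}+\eta_n/2$, i.e., using $\mu_{ij,0}+\eta_n/2$ as the critical value of the conditional independence test. Then $P\{\text{an error occurs in } \hat{\mathcal E}_n\}\to 0$ as $n\to\infty$, where an error means that for some pair $(i,j)$ the declared value differs from $e_{ij}$.
   Context: This is the consistency guarantee for the ''double regression'' procedure for learning an undirected Markov network (graphical model) of possibly non-Gaussian, nonlinearly dependent variables: for each variable $X_i$ one performs a (nonlinear) regression $X_i\sim\boldsymbol X_{V\setminus\{i\}}$ and selects $\hat S_i$; for each pair $j<i$ one performs a regression $X_j\sim \boldsymbol X_{V\setminus\{i,j\}}$ and selects $\hat S_{j\setminus i}$; then a nonparametric conditional independence test of $X_i$ and $X_j$ given $\boldsymbol X_{\hat S_i\cup\hat S_{j\setminus i}\setminus\{j\}}$ is performed with statistic $T_{ij}$. Here $\boldsymbol X_A=\{X_k:k\in A\}$ for $A\subset V$, and the ''set of true variables'' of a regression is the set of explanatory variables on which the conditional distribution of the response actually depends. The notation $\exp\{-O(n^{\delta})\}$ means a quantity bounded by $\exp(-c_1 n^{\delta})$ for some constant $c_1>0$ and all sufficiently large $n$. The suprema and minima over $i,j$ range over all pairs $1\le j<i\le p_n$. *)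

From HB Require Import structures.
From mathcomp Require Import all_boot all_order all_algebra.
From mathcomp Require Import all_classical all_reals all_analysis.
From Stdlib Require Import Relations.Relation_Operators.

Set Implicit Arguments.
Unset Strict Implicit.
Unset Printing Implicit Defensive.

Import Order.TTheory GRing.Theory Num.Theory.
Local Open Scope classical_set_scope.
Local Open Scope ring_scope.
Local Open Scope ereal_scope.

Section DoubleRegressionDefs.
Context {d : measure_display} {T : measurableType d} {R : realType}.

Definition gen_sigma (X : nat -> T -> R) (A : set nat) : set (set T) :=
  <<s [set E | exists k, A k /\ exists B : set R, measurable B /\ E = X k @^-1` B] >>.

(* Conditional independence of sigma-algebras F and G given H under P:
   for A in F and B in G there are H-measurable versions phi, psi of
   P(A | H) and P(B | H) whose product is a version of P(A /\ B | H). *)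
Definition cond_indep (P : probability T R) (F G H : set (set T)) : Prop :=
  forall A B, F A -> G B -> exists phi psi : T -> R,
    (forall x, (0 <= phi x <= 1)%R) /\ (forall x, (0 <= psi x <= 1)%R) /\
    (forall U : set R, measurable U -> H (phi @^-1` U)) /\
    (forall U : set R, measurable U -> H (psi @^-1` U)) /\
    (forall C, H C ->
       P (A `&` C) = \int[P]_(x in C) (phi x)%:E /\
       P (B `&` C) = \int[P]_(x in C) (psi x)%:E /\
       P (A `&` B `&` C) = \int[P]_(x in C) (phi x * psi x)%:E).

Definition CIset (P : probability T R) (X : nat -> T -> R) (A B C : set nat) : Prop :=
  cond_indep P (gen_sigma X A) (gen_sigma X B) (gen_sigma X C).

Definition edge_absent (P : probability T R) (X : nat -> T -> R) (p i j : nat) : Prop :=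
  CIset P X [set i] [set j] (`I_p `\` ([set i] `|` [set j])).

(* S_i : true variables of the regression X_i ~ X_{V \ {i}} : the explanatory
   variables X_k on which the conditional law of X_i actually depends, i.e.
   X_i is not conditionally independent of X_k given the other regressors. *)
Definition true_vars (P : probability T R) (X : nat -> T -> R) (p i : nat) : set nat :=
  [set k | (k < p)%N /\ k <> i /\
     ~ CIset P X [set i] [set k] (`I_p `\` ([set i] `|` [set k]))].

Definition true_vars2 (P : probability T R) (X : nat -> T -> R) (p i j : nat) : set nat :=
  [set k | (k < p)%N /\ k <> i /\ k <> j /\
     ~ CIset P X [set j] [set k] (`I_p `\` ([set i] `|` [set j] `|` [set k]))].

End DoubleRegressionDefs.

Definition dag_acyclic (G : rel nat) : Prop :=
  forall u, ~ clos_trans nat (fun x y => G x y) u u.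

Definition descendant (G : rel nat) (u w : nat) : Prop :=
  clos_refl_trans nat (fun x y => G x y) u w.

Definition adjacent (G : rel nat) : rel nat := fun x y => G x y || G y x.

Definition trail (G : rel nat) (a b : nat) (s : seq nat) : Prop :=
  exists s', s = a :: s' /\ last a s' = b /\ path (adjacent G) a s' /\ uniq s.

Definition blocked (G : rel nat) (C : set nat) (s : seq nat) : Prop :=
  exists k, (0 < k)%N /\ (k.+1 < size s)%N /\
    let u := nth 0%N s k.-1 in let m := nth 0%N s k in let w := nth 0%N s k.+1 in
    if G u m && G w m then (forall z, descendant G m z -> ~ C z)
    else C m.

Definition dsep (G : rel nat) (A B C : set nat) : Prop :=
  forall a b s, A a -> B b -> trail G a b s -> blocked G C s.

Definition markov_faithful_dag {d} {T : measurableType d} {R : realType}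
  (P : probability T R) (X : nat -> T -> R) (p : nat) (G : rel nat) : Prop :=
  (forall u v, G u v -> (u < p)%N /\ (v < p)%N) /\ dag_acyclic G /\
  forall A B C : set nat, A `<=` `I_p -> B `<=` `I_p -> C `<=` `I_p ->
    A `&` B = set0 -> A `&` C = set0 -> B `&` C = set0 ->
    (CIset P X A B C <-> dsep G A B C).

From HB Require Import structures.
From mathcomp Require Import all_boot all_order all_algebra.
From mathcomp Require Import all_classical all_reals all_analysis.
From mathcomp Require Import measurable_realfun ring lra.

(* The threshold test errs on a pair (i, j) only if T_ij is more than eta_n / 2 away
   from its mean: under the null T_ij exceeds mu_ij,0 + eta_n / 2, under the
   alternative it stays below it although mu_ij,1 > mu_ij,0 + eta_n. A union bound
   over the at most p_n^2 pairs and the tail assumption give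
   P(error) <= p_n^2 exp(-c1 n^delta), which tends to 0 because p_n is polynomial
   in n and exp(-c1 n^delta) decays faster than any power of n. *)

Import Order.TTheory GRing.Theory Num.Theory numFieldNormedType.Exports.
Local Open Scope classical_set_scope.
Local Open Scope ring_scope.

Lemma misclassified_far_from_mean {R : realFieldType} {H : Prop} {t m m0 m1 eta : R} :
  eta < m1 - m0 -> (H -> m = m0) -> (~ H -> m = m1) ->
  (m0 + eta / 2 < t <-> H) -> eta / 2 < `|t - m|.
Proof.
move=> sep m_null m_alt misclassified.
have [null | alt] := pselect H.
- have declared : m0 + eta / 2 < t by apply/misclassified.
  by rewrite (m_null null) (lt_le_trans _ (ler_norm _)) //; lra.
- have undeclared : t <= m0 + eta / 2 by rewrite leNgt; apply/negP => /misclassified.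
  by rewrite (m_alt alt) distrC (lt_le_trans _ (ler_norm _)) //; lra.
Qed.

Lemma quadratic_le_vertex {R : realFieldType} (b q L : R) :
  0 < q -> b * L - q * L ^+ 2 / 2 <= b ^+ 2 / (2 * q).
Proof.
move=> q_gt0; rewrite -subr_ge0.
have -> : b ^+ 2 / (2 * q) - (b * L - q * L ^+ 2 / 2) = (q * L - b) ^+ 2 / (2 * q).
  by field; rewrite gt_eqF.
by rewrite divr_ge0 ?sqr_ge0 // mulr_ge0 // ltW.
Qed.

Section stretched_exponential_decay.
Variable R : realType.

(* With L = ln n, n^a exp(-c1 n^delta) = exp(a L - c1 e^(delta L)) and
   e^(delta L) >= (delta L)^2 / 2; the quadratic (a + 1) L - c1 delta^2 L^2 / 2 is
   at most its vertex value M, whence the bound exp(M - L) = exp M / n. *)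
Lemma powR_expR_decay_le (a c1 delta : R) : 0 < c1 -> 0 < delta ->
  exists K : R, forall n, (0 < n)%N ->
    n%:R `^ a * expR (- (c1 * n%:R `^ delta)) <= K / n%:R.
Proof.
move=> c1_gt0 delta_gt0; set q := c1 * delta ^+ 2.
have q_gt0 : 0 < q by rewrite mulr_gt0 // exprn_gt0.
set M := (a + 1) ^+ 2 / (2 * q).
exists (expR M) => n n_gt0.
have n_pos : (0 : R) < n%:R by rewrite ltr0n.
set L := ln (n%:R : R).
have L_ge0 : 0 <= L by rewrite ln_ge0 // ler1n.
have powRE s : n%:R `^ s = expR (s * L) by rewrite /powR gt_eqF.
have expR_M_div : expR M / n%:R = expR (M - L) by rewrite expRD expRN lnK ?posrE.
rewrite !powRE -expRD expR_M_div ler_expR.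
have exp_quadratic : 1 + (delta * L) ^+ 2 / 2 <= expR (delta * L).
  exact: (@expR_ge1Dxn R _ 1 (mulr_ge0 (ltW delta_gt0) L_ge0)).
have := quadratic_le_vertex (a + 1) q L q_gt0.
rewrite -/M /q; nra.
Qed.

Lemma cvgn_powR_expR_decay (a c1 delta : R) : 0 < c1 -> 0 < delta ->
  n%:R `^ a * expR (- (c1 * n%:R `^ delta)) @[n --> \oo] --> 0.
Proof.
move=> c1_gt0 delta_gt0; have [K decay_le] := powR_expR_decay_le a c1 delta c1_gt0 delta_gt0.
have K_div_cvg0 : K / n%:R @[n --> \oo] --> 0.
  rewrite -(mulr0 K); apply: cvgMr; apply/gtr0_cvgV0; last exact: cvgr_idn.
  by near=> n; rewrite ltr0n; near: n; exists 1%N.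
apply: (squeeze_cvgr _ (cvg_cst 0) K_div_cvg0).
near=> n; rewrite mulr_ge0 ?powR_ge0 ?expR_ge0 //= decay_le //.
by near: n; exists 1%N.
Unshelve. all: end_near.
Qed.

End stretched_exponential_decay.

Section finite_union_bound.
Context {d} {T : measurableType d} {R : realType} (mu : {measure set T -> \bar R}).

Lemma measure_bigcup_ord_le (F : nat -> set T) m (b : R) :
  (forall k, (k < m)%N -> measurable (F k)) ->
  (forall k, (k < m)%N -> (mu (F k) <= b%:E)%E) ->
  (mu (\bigcup_(k < m) F k) <= (m%:R * b)%:E)%E.
Proof.
move=> mF muF; rewrite bigcup_mkord; apply: le_trans (Boole_inequality _ mF) _.
rewrite (@le_trans _ _ (\sum_(k < m) b%:E)%E) //; first by apply: lee_sum => k _; exact: muF.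
by rewrite sumEFin sumr_const card_ord mulr_natl.
Qed.

Lemma measure_bigcup_pairs_le (F : nat -> nat -> set T) m (b : R) : 0 <= b ->
  (forall i j, (j < i)%N -> (i < m)%N -> measurable (F i j)) ->
  (forall i j, (j < i)%N -> (i < m)%N -> (mu (F i j) <= b%:E)%E) ->
  (mu (\bigcup_(i < m) \bigcup_(j < i) F i j) <= (m%:R ^+ 2 * b)%:E)%E.
Proof.
move=> b_ge0 mF muF; rewrite expr2 -mulrA.
apply: measure_bigcup_ord_le => i im.
  by apply: bigcup_measurable => j ji; exact: mF.
have inner_le : (mu (\bigcup_(j < i) F i j) <= (i%:R * b)%:E)%E.
  by apply: measure_bigcup_ord_le => j ji; [exact: mF | exact: muF].
by rewrite (le_trans inner_le) // lee_fin ler_wpM2r // ler_nat ltnW.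
Qed.

End finite_union_bound.

Lemma measurable_fun_gt d (T : measurableType d) (R : realType) (f : T -> R) (c : R) :
  measurable_fun setT f -> measurable [set w | c < f w].
Proof. by move=> mf; rewrite -preimage_itvoy -[X in measurable X]setTI; exact: mf. Qed.

Lemma measurable_iff_Prop d (T : measurableType d) (E : set T) (A : Prop) :
  measurable E -> measurable [set w | E w <-> A].
Proof.
move=> mE; have [a | na] := pselect A.
  by rewrite (_ : [set w | _] = E) //; apply/seteqP; split => w /=; tauto.
by rewrite (_ : [set w | _] = ~` E); [exact: measurableC | apply/seteqP; split => w /=; tauto].
Qed.

Section threshold_test_errors.
Context {d} {T : measurableType d} {R : realType} (mu : {measure set T -> \bar R}).
Context {m : nat} {stat : nat -> nat -> T -> R} {null : nat -> nat -> Prop}.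
Context {mean mean0 mean1 : nat -> nat -> R} {eta b : R}.
Hypothesis b_ge0 : 0 <= b.
Hypothesis stat_meas :
  forall {i j}, (j < i)%N -> (i < m)%N -> measurable_fun setT (stat i j).
Hypothesis mean_null : forall {i j}, (j < i)%N -> (i < m)%N -> null i j -> mean i j = mean0 i j.
Hypothesis mean_alt : forall {i j}, (j < i)%N -> (i < m)%N -> ~ null i j -> mean i j = mean1 i j.
Hypothesis separation : forall {i j}, (j < i)%N -> (i < m)%N -> eta < mean1 i j - mean0 i j.
Hypothesis tail_le : forall i j, (j < i)%N -> (i < m)%N ->
  (mu [set w | (eta / 2 < `|stat i j w - mean i j|)%R] <= b%:E)%E.

Let misclassified i j := [set w | mean0 i j + eta / 2 < stat i j w <-> null i j].
Let tail i j := [set w | eta / 2 < `|stat i j w - mean i j|].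

Let misclassified_sub_tail :
  \bigcup_(i < m) \bigcup_(j < i) misclassified i j `<=` \bigcup_(i < m) \bigcup_(j < i) tail i j.
Proof.
apply: subset_bigcup => i im; apply: subset_bigcup => j ji w.
exact: misclassified_far_from_mean (separation ji im) (mean_null ji im) (mean_alt ji im).
Qed.

Let tail_meas i j : (j < i)%N -> (i < m)%N -> measurable (tail i j).
Proof.
move=> ji im; apply: measurable_fun_gt; apply: measurableT_comp (@normr_measurable R setT) _.
exact: measurable_funB (stat_meas ji im) (measurable_cst _).
Qed.

Let misclassified_meas i j : (j < i)%N -> (i < m)%N -> measurable (misclassified i j).
Proof. by move=> ji im; apply/measurable_iff_Prop/measurable_fun_gt/stat_meas. Qed.

Lemma measure_misclassified_le :
  (mu [set w | exists i j, (j < i)%N /\ (i < m)%N /\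
     ((mean0 i j + eta / 2 < stat i j w)%R <-> null i j)] <= (m%:R ^+ 2 * b)%:E)%E.
Proof.
have -> : [set w | exists i j, (j < i)%N /\ (i < m)%N /\ misclassified i j w] =
          \bigcup_(i < m) \bigcup_(j < i) misclassified i j.
  apply/seteqP; split => w /=.
  - by move=> [i [j [ji [im err]]]]; exists i => //; exists j.
  - by move=> [i im [j ji err]]; exists i, j.
apply: le_trans (le_measure _ _ _ misclassified_sub_tail) _.
- by rewrite inE; apply: bigcup_measurable => i im; apply: bigcup_measurable => j ji;
    exact: misclassified_meas.
- by rewrite inE; apply: bigcup_measurable => i im; apply: bigcup_measurable => j ji;
    exact: tail_meas.
exact: measure_bigcup_pairs_le.
Qed.

End threshold_test_errors.

(* n : sample size; p n : number of variables; X n k : population variable X_k;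
   data n w t k : k-th variable of the t-th sample (t < n);
   tstat n i j : the test statistic T_ij as a function of the data;
   sel1 n i, sel2 n i j : selection procedures giving \hat S_i, \hat S_{j\i};
   mu n i j = E(T_ij); mu0 / mu1 : means of T_ij under null / alternative. *)
Theorem theorem1 (d : measure_display) (Omega : measurableType d) (R : realType)
  (P : probability Omega R)
  (p : nat -> nat)
  (X : nat -> nat -> Omega -> R)
  (data : nat -> Omega -> nat -> nat -> R)
  (tstat : nat -> nat -> nat -> (nat -> nat -> R) -> R)
  (sel1 : nat -> nat -> (nat -> nat -> R) -> set nat)
  (sel2 : nat -> nat -> nat -> (nat -> nat -> R) -> set nat)
  (mu mu0 mu1 : nat -> nat -> nat -> R)
  (c0 kappa : R) :
  (* measurability of the variables and of the data *)
  (forall n k, (k < p n)%N -> measurable_fun setT (X n k)) ->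
  (forall n t k, (t < n)%N -> (k < p n)%N -> measurable_fun setT (fun w => data n w t k)) ->
  (* the n samples are identically distributed as (X_0,...,X_{p-1}) ... *)
  (forall n t (B : nat -> set R), (t < n)%N -> (forall k, measurable (B k)) ->
     P [set w | forall k, (k < p n)%N -> B k (data n w t k)] =
     P [set w | forall k, (k < p n)%N -> B k (X n k w)]) ->
  (* ... and mutually independent *)
  (forall n (B : nat -> nat -> set R), (forall t k, measurable (B t k)) ->
     P [set w | forall t k, (t < n)%N -> (k < p n)%N -> B t k (data n w t k)] =
     (\prod_(t < n) P [set w | forall k, (k < p n)%N -> B t k (data n w t k)])%E) ->
  (* selected sets are subsets of the regressors, and are events *)
  (forall n i D, (i < p n)%N -> sel1 n i D `<=` `I_(p n) `\` [set i]) ->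
  (forall n i j D, (j < i)%N -> (i < p n)%N ->
     sel2 n i j D `<=` `I_(p n) `\` ([set i] `|` [set j])) ->
  (forall n i k, (i < p n)%N -> measurable [set w | sel1 n i (data n w) k]) ->
  (forall n i j k, (j < i)%N -> (i < p n)%N -> measurable [set w | sel2 n i j (data n w) k]) ->
  (* T_ij is a random variable with mean mu_ij *)
  (forall n i j, (j < i)%N -> (i < p n)%N ->
     measurable_fun setT (fun w => tstat n i j (data n w)) /\
     P.-integrable setT (fun w => (tstat n i j (data n w))%:E) /\
     (\int[P]_w (tstat n i j (data n w))%:E = (mu n i j)%:E)%E) ->
  (* mu0 / mu1 are the means of T_ij under the null e_ij = 0 / alternative e_ij = 1 *)
  (forall n i j, (j < i)%N -> (i < p n)%N ->
     (edge_absent P (X n) (p n) i j -> mu n i j = mu0 n i j) /\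
     (~ edge_absent P (X n) (p n) i j -> mu n i j = mu1 n i j)) ->
  (* (1) Markov and faithful to a DAG *)
  (forall n, exists G : rel nat, markov_faithful_dag P (X n) (p n) G) ->
  (* (2) p_n grows polynomially in n *)
  (exists (C a : R), 0 < C /\ 0 < a /\
     \forall n \near \oo, (p n)%:R <= C * (n%:R `^ a)) ->
  (* (3) uniform sure screening *)
  (forall eps : R, 0 < eps -> \forall n \near \oo, forall i, (i < p n)%N ->
     ((1 - eps)%:E <= P [set w | true_vars P (X n) (p n) i `<=` sel1 n i (data n w)])%E) ->
  (forall eps : R, 0 < eps -> \forall n \near \oo, forall i j, (j < i)%N -> (i < p n)%N ->
     ((1 - eps)%:E <= P [set w | true_vars2 P (X n) (p n) i j `<=` sel2 n i j (data n w)])%E) ->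
  (* (4) separation, with eta_n = c0 n^(-kappa) *)
  0 < c0 -> 0 < kappa ->
  (forall n i j, (j < i)%N -> (i < p n)%N ->
     c0 * (n%:R `^ (- kappa)) < mu1 n i j - mu0 n i j) ->
  (* (5) tail probability *)
  (exists delta c1 : R, 0 < delta /\ 0 < c1 /\
     \forall n \near \oo, forall i j, (j < i)%N -> (i < p n)%N ->
       (P [set w | (c0 * (n%:R `^ (- kappa)) / 2 < `|tstat n i j (data n w) - mu n i j|)%R]
          <= (expR (- (c1 * n%:R `^ delta)))%:E)%E) ->
  (* conclusion: P(some declared edge indicator differs from e_ij) -> 0 *)
  (fun n => P [set w | exists i j, (j < i)%N /\ (i < p n)%N /\
      ((mu0 n i j + c0 * (n%:R `^ (- kappa)) / 2 < tstat n i j (data n w))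
         <-> edge_absent P (X n) (p n) i j)]) @ \oo --> 0%E.
Proof.
move=> _ _ _ _ _ _ _ _ T_rv mean_cases _ [C [a [_ [_ p_poly]]]] _ _ _ _ separation
  [delta [c1 [delta_gt0 [c1_gt0 tail_le]]]].
set b := fun n : nat => expR (- (c1 * n%:R `^ delta)).
have bound_cvg0 : (C ^+ 2 * (n%:R `^ (a * 2) * b n))%:E @[n --> \oo] --> 0%E.
  apply: cvg_EFin; first exact: nearW.
  by rewrite -(mulr0 (C ^+ 2)); apply: cvgMr; exact: cvgn_powR_expR_decay.
refine (squeeze_cvge _ (cvg_cst 0%E) bound_cvg0).
near=> n; rewrite measure_ge0 /=.
have p_le : (p n)%:R <= C * n%:R `^ a by near: n.
apply: le_trans (measure_misclassified_le (mean := mu n) (b := b n) P (expR_ge0 _) _ _ _ (separation n) _) _.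
- by move=> i j ji ip; case: (T_rv n i j ji ip).
- by move=> i j ji ip; case: (mean_cases n i j ji ip).
- by move=> i j ji ip; case: (mean_cases n i j ji ip).
- by near: n.
rewrite lee_fin mulrA ler_wpM2r ?expR_ge0 // powRrM powR_mulrn ?powR_ge0 // -exprMn.
by rewrite !expr2 ler_pM.
Unshelve. all: end_near.
Qed.
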